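(* For each $h\in\{1,2\}$, let $\mathrm{bd}_h\in\mathbb{BD}^{\mathbb{Z}}_n$ be a non-empty integer BD shape represented by the closed integer graph $G_h=(\mathcal{N},w_h)$, and let $R_h$ be a subgraph of $G_h$ such that $\mathrm{closure}(R_h)=G_h$. Let $G_1\sqcup G_2=(\mathcal{N},w)$. Then $\mathrm{bd}_1\uplus\mathrm{bd}_2\neq\mathrm{bd}_1\cup\mathrm{bd}_2$ if and only if there exist an arc $(i,j)$ of $R_1$ and an arc $(k,\ell)$ of $R_2$ such that (1) $w_1(i,j)<w_2(i,j)$ and $w_2(k,\ell)<w_1(k,\ell)$; and (2) $w_1(i,j)+w_2(k,\ell)+2\le w(i,\ell)+w(k,j)$.
   Context: Let $\mathcal{N}=\{0,1,\dots,n\}$. An integer graph is a pair $(\mathcal{N},w)$ with $w:\mathcal{N}\times\mathcal{N}\to\mathbb{Z}\cup\{+\infty\}$ (with $d<+\infty$, $d+(+\infty)=+\infty$); $(i,j)$ is an arc if $w(i,j)<+\infty$. A path $n_0\cdots n_p$ has weight $\sum_t w(n_{t-1},n_t)$; the graph is consistent if no cycle has negative weight. Graphs are ordered by $G\unlhd G'$ iff $w\le w'$ pointwise. A consistent graph is closed if $w(i,i)=0$ and $w(i,j)\le w(i,k)+w(k,j)$ for all $i,j,k$. $\mathrm{closure}(G)$ is the pointwise maximum of all closed graphs $G^c\unlhd G$. $R$ is a subgraph of $G$ if every arc of $R$ is an arc of $G$ with the same weight. An integer BD shape is a set $\{\mathbf{x}\in\mathbb{Z}^n : \text{finitely many constraints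 } \pm x_i\le b,\ x_i-x_j\le b\}$ with $b\in\mathbb{Z}$; $\mathbb{BD}^{\mathbb{Z}}_n$ is the set of them. A consistent integer graph $G=(\mathcal{N},w)$ represents $\{\mathbf{x}\in\mathbb{Z}^n : x_i-x_j\le w(i,j)\ \forall i,j\in\mathcal{N}\}$ with $x_0:=0$. $G_1\sqcup G_2=(\mathcal{N},w)$ with $w(i,j)=\max(w_1(i,j),w_2(i,j))$. $\mathrm{bd}_1\uplus\mathrm{bd}_2$ is the least integer BD shape containing $\mathrm{bd}_1\cup\mathrm{bd}_2$, represented by $G_1\sqcup G_2$. *)

From mathcomp Require Import all_boot all_order all_algebra.
Set Implicit Arguments. Unset Strict Implicit. Unset Printing Implicit Defensive.
Import Order.TTheory GRing.Theory Num.Theory.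
Local Open Scope ring_scope.

Inductive ext := Fin of int | PInf.

Definition add_w (a b : ext) : ext :=
  match a, b with Fin x, Fin y => Fin (x + y) | _, _ => PInf end.
Definition le_w (a b : ext) : bool :=
  match a, b with
  | Fin x, Fin y => x <= y
  | _, PInf => true
  | PInf, Fin _ => false end.
Definition lt_w (a b : ext) : bool :=
  match a, b with
  | Fin x, Fin y => x < y
  | Fin _, PInf => true
  | PInf, _ => false end.
Definition max_w (a b : ext) : ext :=
  match a, b with Fin x, Fin y => Fin (Num.max x y) | _, _ => PInf end.

Definition node n := 'I_n.+1.
(* An integer graph (N, w) is identified with its weight function w. *)
Definition graph n := node n -> node n -> ext.

Definition is_arc n (G : graph n) (i j : node n) : Prop := G i j <> PInf.

Fixpoint pathw n (G : graph n) (x : node n) (s : seq (node n)) : ext :=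
  match s with
  | [::] => Fin 0
  | y :: s' => add_w (G x y) (pathw G y s')
  end.

Definition consistent n (G : graph n) : Prop :=
  forall (x : node n) (s : seq (node n)), s <> [::] -> last x s = x ->
    ~~ lt_w (pathw G x s) (Fin 0).

Definition graph_le n (G G' : graph n) : Prop := forall i j, le_w (G i j) (G' i j).

Definition closed_graph n (G : graph n) : Prop :=
  [/\ consistent G, (forall i, G i i = Fin 0) &
      (forall i j k, le_w (G i j) (add_w (G i k) (G k j)))].

Definition is_closure n (G C : graph n) : Prop :=
  forall i j,
    (exists Gc : graph n, [/\ closed_graph Gc, graph_le Gc G & Gc i j = C i j]) /\
    (forall Gc : graph n, closed_graph Gc -> graph_le Gc G -> le_w (Gc i j) (C i j)).

Definition subgraph n (R G : graph n) : Prop :=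
  forall i j, R i j <> PInf -> R i j = G i j.

(* points of Z^n, extended with x_0 := 0 *)
Definition xval n (x : 'I_n -> int) (i : node n) : int :=
  match unlift ord0 i with Some j => x j | None => 0 end.

Definition gamma n (G : graph n) (x : 'I_n -> int) : Prop :=
  forall i j, le_w (Fin (xval x i - xval x j)) (G i j).

Inductive bd_cstr n :=
  | CUp of 'I_n & int
  | CLo of 'I_n & int
  | CDiff of 'I_n & 'I_n & int.

Definition sat_cstr n (c : bd_cstr n) (x : 'I_n -> int) : Prop :=
  match c with
  | CUp i b => x i <= b
  | CLo i b => - x i <= b
  | CDiff i j b => x i - x j <= b
  end.

Fixpoint sat_all n (cs : seq (bd_cstr n)) (x : 'I_n -> int) : Prop :=
  match cs with [::] => True | c :: cs' => sat_cstr c x /\ sat_all cs' x end.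

Definition is_BD n (S : ('I_n -> int) -> Prop) : Prop :=
  exists cs : seq (bd_cstr n), forall x, S x <-> sat_all cs x.

Definition bd_uplus n (S1 S2 : ('I_n -> int) -> Prop) (x : 'I_n -> int) : Prop :=
  forall B, is_BD B -> (forall y, S1 y \/ S2 y -> B y) -> B x.

Definition set_eq n (S T : ('I_n -> int) -> Prop) : Prop := forall x, S x <-> T x.

Definition gjoin n (G1 G2 : graph n) : graph n := fun i j => max_w (G1 i j) (G2 i j).

(* The least BD shape containing gamma G1 and gamma G2 is gamma (G1 ⊔ G2):
   a closed graph is tight, i.e. each entry w(s,t) is the supremum of
   x_s - x_t over its shape, so any BD constraint valid on both shapes is
   implied by the corresponding entries of G1 and G2, hence by their maximum.
   A point of gamma (G1 ⊔ G2) outside both shapes violates an arc (i,j) of R1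
   and an arc (k,l) of R2 (as G_h = closure R_h); adding the two violations
   and regrouping as (x_i - x_l) + (x_k - x_j) gives (2).  Conversely, (2)
   says the cycle i -> l -> k -> j -> i stays nonnegative when the strict constraints
   x_i - x_j > w1(i,j) and x_k - x_l > w2(k,l) are added to G1 ⊔ G2; a point
   meeting both is built by capping a point of the join by the cones of
   shortest-path distances towards l and towards j. *)

From mathcomp Require Import all_boot all_order all_algebra.
Import Order.TTheory GRing.Theory Num.Theory.
Local Open Scope ring_scope.
From mathcomp Require Import zify.
From Stdlib Require Import Classical.
Set Implicit Arguments. Unset Strict Implicit.

Lemma le_w_trans (e1 e2 e3 : ext) : le_w e1 e2 -> le_w e2 e3 -> le_w e1 e3.
Proof. by case: e1 => [a|]; case: e2 => [b|]; case: e3 => [c|] //=; lia. Qed.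

Lemma lt_wNge (e1 e2 : ext) : lt_w e1 e2 = ~~ le_w e2 e1.
Proof. by case: e1 => [a|]; case: e2 => [b|] //=; rewrite ltNge. Qed.

Lemma lt_w_FinD1 (a : int) (e : ext) : lt_w (Fin a) e = le_w (Fin (a + 1)) e.
Proof. by case: e => [b|] //=; rewrite lezD1. Qed.

Lemma lt_w_le_trans (e1 e2 e3 : ext) : lt_w e1 e2 -> le_w e2 e3 -> lt_w e1 e3.
Proof. by case: e1 => [a|]; case: e2 => [b|]; case: e3 => [c|] //=; lia. Qed.

Lemma le_w_max (e1 e2 e : ext) : le_w (max_w e1 e2) e = le_w e1 e && le_w e2 e.
Proof. by case: e1 => [a|]; case: e2 => [b|]; case: e => [c|] //=; lia. Qed.

Lemma le_w_max_l (e1 e2 : ext) : le_w e1 (max_w e1 e2).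
Proof. by case: e1 => [a|]; case: e2 => [b|] //=; lia. Qed.

Lemma le_w_max_r (e1 e2 : ext) : le_w e2 (max_w e1 e2).
Proof. by case: e1 => [a|]; case: e2 => [b|] //=; lia. Qed.

Lemma le_w_addr_split (z1 z2 : int) (e1 e2 : ext) :
  le_w (Fin (z1 + z2)) (add_w e1 e2) ->
  exists d, le_w (Fin (z1 - d)) e1 /\ le_w (Fin (z2 + d)) e2.
Proof.
case: e1 => [c1|]; case: e2 => [c2|] /= H.
- by exists (z1 - c1); split; lia.
- by exists (z1 - c1); split; lia.
- by exists (c2 - z2); split; lia.
- by exists 0.
Qed.

Definition minw (e : ext) (z : int) : int := if e is Fin a then Num.min a z else z.

Lemma minw_le_r e z : minw e z <= z.
Proof. by case: e => [a|] /=; lia. Qed.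

Lemma minw_le_l e z : le_w (Fin (minw e z)) e.
Proof. by case: e => [a|] //=; lia. Qed.

Lemma minw_ge e z m : m <= z -> le_w (Fin m) e -> m <= minw e z.
Proof. by case: e => [a|] /=; lia. Qed.

Section Potentials.
Variable n : nat.
Implicit Types (C G R : graph n) (g : node n -> int).

Definition potential C g := forall u v, le_w (Fin (g u - g v)) (C u v).

Definition triangular C := forall i j k, le_w (C i j) (add_w (C i k) (C k j)).

Lemma triangular_gjoin (C1 C2 : graph n) :
  triangular C1 -> triangular C2 -> triangular (gjoin C1 C2).
Proof.
move=> T1 T2 i j k; move: (T1 i j k) (T2 i j k); rewrite /gjoin.
case: (C1 i j) => [a|]; case: (C1 i k) => [b|]; case: (C1 k j) => [c|];
case: (C2 i j) => [d|]; case: (C2 i k) => [e|]; case: (C2 k j) => [f|] //=; lia.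
Qed.

Lemma potential_shift C g M : potential C g -> potential C (fun v => g v + M).
Proof. by move=> P u v; have := P u v; case: (C u v) => [c|] //=; lia. Qed.

(* By the triangle inequality the cone [v |-> C v t + d] of distances to [t]
   is itself a potential, so capping a potential by it yields a potential. *)
Definition cap C t d g v := minw (add_w (C v t) (Fin d)) (g v).

Lemma potential_cap C t d g :
  triangular C -> potential C g -> potential C (cap C t d g).
Proof.
move=> T P u v; rewrite /cap.
have Hu := minw_le_r (add_w (C u t) (Fin d)) (g u).
move: (T u t v) (P u v); case: (C u v) => [c|] //=.
case: (C v t) => [b|] /=; last by move=> _; lia.
by case: (C u t) => [a|] //=; lia.
Qed.

Lemma cap_le C t d g v : cap C t d g v <= g v.
Proof. exact: minw_le_r. Qed.

Lemma cap_le_root C t d g : C t t = Fin 0 -> cap C t d g t <= d.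
Proof. by move=> Ctt; rewrite /cap Ctt /= add0r; lia. Qed.

Lemma cap_ge C t d g v m :
  m <= g v -> le_w (Fin (m - d)) (C v t) -> m <= cap C t d g v.
Proof.
by move=> Hg Hc; apply: minw_ge => //; move: Hc; case: (C v t) => [c|] //=; lia.
Qed.

(* Two constraints [h i - h j > a] and [h k - h l > b] can be imposed at once
   unless the cycle i -> l -> k -> j -> i through them is negative. *)
Lemma potential_two_gaps C i j k l a b :
  triangular C -> C j j = Fin 0 -> C l l = Fin 0 ->
  (exists g, potential C g) ->
  lt_w (Fin a) (C i j) -> lt_w (Fin b) (C k l) ->
  le_w (Fin (a + b + 2)) (add_w (C i l) (C k j)) ->
  exists h, [/\ potential C h, a < h i - h j & b < h k - h l].
Proof.
move=> T Cjj Cll [g P] Hij Hkl.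
rewrite (_ : a + b + 2 = (a + 1) + (b + 1)); last by lia.
move=> /le_w_addr_split [d [Hil Hkj]].
pose M := Num.max (a + 1 - g i) (b + 1 + d - g k).
pose h := cap C j 0 (cap C l d (fun v => g v + M)).
exists h; split.
- by apply: potential_cap => //; apply: potential_cap => //; apply: potential_shift.
- have hj : h j <= 0 by apply: cap_le_root.
  suff : a + 1 <= h i by lia.
  apply: cap_ge; last by rewrite subr0 -lt_w_FinD1.
  by apply: cap_ge => //; lia.
- have hl : h l <= d by apply: le_trans (cap_le _ _ _ _ _) (cap_le_root _ _ Cll).
  suff : b + 1 + d <= h k by lia.
  apply: cap_ge; last by rewrite subr0.
  by apply: cap_ge; [lia | rewrite addrK -lt_w_FinD1].
Qed.

Lemma potential_gap C s t b :
  triangular C -> C t t = Fin 0 -> (exists g, potential C g) ->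
  lt_w (Fin b) (C s t) -> exists h, potential C h /\ b < h s - h t.
Proof.
move=> T Ctt P Hst.
have [|h [Ph Hb _]] := potential_two_gaps T Ctt Ctt P Hst Hst.
  by move: Hst; case: (C s t) => [c|] //=; lia.
by exists h.
Qed.

Definition to_point g : 'I_n -> int := fun t => g (lift ord0 t) - g ord0.

Lemma xval_to_point g v : xval (to_point g) v = g v - g ord0.
Proof. by rewrite /xval; case: (unliftP ord0 v) => [t|] ->; rewrite ?subrr. Qed.

Lemma gamma_to_point C g : potential C g -> gamma C (to_point g).
Proof.
move=> P u v; rewrite !xval_to_point.
by have := P u v; case: (C u v) => [c|] //=; lia.
Qed.

Lemma closed_tight C s t b : closed_graph C -> (exists x, gamma C x) ->
  (forall y, gamma C y -> xval y s - xval y t <= b) -> le_w (C s t) (Fin b).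
Proof.
move=> [_ D T] [x Hx] Hb; apply: contraT; rewrite -lt_wNge => Hlt.
have [h [Ph Hh]] := potential_gap T (D t) (ex_intro _ (xval x) Hx) Hlt.
by have := Hb _ (gamma_to_point Ph); rewrite !xval_to_point; lia.
Qed.

Lemma gamma_le C C' x : graph_le C C' -> gamma C x -> gamma C' x.
Proof. by move=> Hle Hx i j; apply: le_w_trans (Hx i j) (Hle i j). Qed.

Definition diff_graph (x : 'I_n -> int) : graph n :=
  fun u v => Fin (xval x u - xval x v).

Lemma pathw_diff_graph x u s :
  pathw (diff_graph x) u s = Fin (xval x u - xval x (last u s)).
Proof.
elim: s u => [|v s IH] u /=; first by rewrite subrr.
by rewrite IH /=; congr Fin; lia.
Qed.

Lemma closed_diff_graph x : closed_graph (diff_graph x).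
Proof.
split.
- by move=> u s _ Hl; rewrite pathw_diff_graph Hl /= subrr ltxx.
- by move=> u; rewrite /diff_graph subrr.
- by move=> u v w; rewrite /diff_graph /=; lia.
Qed.

Lemma gamma_closure R G x : is_closure R G -> gamma R x -> gamma G x.
Proof.
by move=> Cl Hx i j; have [_ H] := Cl i j; apply: (H _ (closed_diff_graph x)).
Qed.

Lemma violated_arc R G x : subgraph R G -> is_closure R G -> ~ gamma G x ->
  exists i j c, [/\ R i j = Fin c, G i j = Fin c & c < xval x i - xval x j].
Proof.
move=> S Cl Hx; apply: NNPP => Hno; apply/Hx/(gamma_closure Cl) => i j.
case E: (R i j) => [c|] //=; rewrite leNgt; apply/negP => Hlt.
by apply: Hno; exists i, j, c; split => //; rewrite -E S ?E.
Qed.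

End Potentials.

Section BDShapes.
Variable n : nat.
Implicit Types (C : graph n).

Definition cstr_of (u v : node n) (e : ext) : seq (bd_cstr n) :=
  match e, unlift ord0 u, unlift ord0 v with
  | Fin b, Some u', Some v' => [:: CDiff u' v' b]
  | Fin b, Some u', None => [:: CUp u' b]
  | Fin b, None, Some v' => [:: CLo v' b]
  | _, _, _ => [::]
  end.

Lemma sat_all_cat (s1 s2 : seq (bd_cstr n)) x :
  sat_all (s1 ++ s2) x <-> sat_all s1 x /\ sat_all s2 x.
Proof. by elim: s1 => [|c s IH] /=; [tauto | rewrite IH; tauto]. Qed.

Lemma sat_all_flatten (T : eqType) (s : seq T) (f : T -> seq (bd_cstr n)) x :
  sat_all (flatten [seq f a | a <- s]) x <-> forall a, a \in s -> sat_all (f a) x.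
Proof.
elim: s => [|a s IH] /=; first by split.
rewrite sat_all_cat IH; split.
- by move=> [H1 H2] b; rewrite inE => /orP [/eqP ->|]; auto.
- by move=> H; split => [|b Hb]; apply: H; rewrite inE ?eqxx ?Hb ?orbT.
Qed.

(* The entry at (0, 0) yields no constraint, hence the side condition. *)
Lemma sat_cstr_of u v e x : (u = ord0 -> v = ord0 -> le_w (Fin 0) e) ->
  sat_all (cstr_of u v e) x <-> le_w (Fin (xval x u - xval x v)) e.
Proof.
rewrite /cstr_of /xval; case: e => [b|] //= H.
case: (unliftP ord0 u) => [u'|] Eu; case: (unliftP ord0 v) => [v'|] Ev /=.
- by split => [[]|].
- by rewrite subr0; split => [[]|].
- by rewrite sub0r; split => [[]|].
- by rewrite subrr; split => // _; apply: H.
Qed.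

Lemma gamma_BD C : (forall i, C i i = Fin 0) -> is_BD (gamma C).
Proof.
move=> D.
exists (flatten [seq flatten [seq cstr_of u v (C u v) | v <- enum 'I_n.+1]
                 | u <- enum 'I_n.+1]) => x.
have Hcs u v : sat_all (cstr_of u v (C u v)) x <-> le_w (Fin (xval x u - xval x v)) (C u v).
  by apply: sat_cstr_of => -> ->; rewrite D.
rewrite sat_all_flatten; split.
- by move=> H u _; rewrite sat_all_flatten => v _; apply/Hcs.
- move=> H u v; apply/Hcs.
  by have /sat_all_flatten := H u (mem_enum _ u); apply; rewrite mem_enum.
Qed.

Definition src (c : bd_cstr n) : node n :=
  match c with CUp i _ | CDiff i _ _ => lift ord0 i | CLo _ _ => ord0 end.
Definition dst (c : bd_cstr n) : node n :=
  match c with CUp _ _ => ord0 | CLo i _ | CDiff _ i _ => lift ord0 i end.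
Definition bnd (c : bd_cstr n) : int :=
  match c with CUp _ b | CLo _ b | CDiff _ _ b => b end.

Lemma sat_cstrE c y : sat_cstr c y <-> xval y (src c) - xval y (dst c) <= bnd c.
Proof.
have E1 i : xval y (lift ord0 i) = y i by rewrite /xval liftK.
have E0 : xval y ord0 = 0 by rewrite /xval unlift_none.
by case: c => [i b|i b|i j b] /=; rewrite ?E1 ?E0 ?subr0 ?sub0r.
Qed.

Lemma closed_le_bnd C c : closed_graph C -> (exists x, gamma C x) ->
  (forall y, gamma C y -> sat_cstr c y) -> le_w (C (src c) (dst c)) (Fin (bnd c)).
Proof. by move=> CC neC Hc; apply: closed_tight => // y /Hc /sat_cstrE. Qed.

Lemma gamma_sat_cstr C c x :
  le_w (C (src c) (dst c)) (Fin (bnd c)) -> gamma C x -> sat_cstr c x.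
Proof.
move=> Hc Hx; apply/sat_cstrE.
by have := le_w_trans (Hx (src c) (dst c)) Hc.
Qed.

End BDShapes.

Section JoinOfClosedGraphs.
Variables (n : nat) (G1 G2 : graph n).
Hypotheses (C1 : closed_graph G1) (C2 : closed_graph G2).
Hypotheses (ne1 : exists x, gamma G1 x) (ne2 : exists x, gamma G2 x).
Local Notation w := (gjoin G1 G2).

Lemma gamma_join_l x : gamma G1 x -> gamma w x.
Proof. by apply: gamma_le => i j; apply: le_w_max_l. Qed.

Lemma gamma_join_r x : gamma G2 x -> gamma w x.
Proof. by apply: gamma_le => i j; apply: le_w_max_r. Qed.

Lemma join_diag i : w i i = Fin 0.
Proof. by have [_ D1 _] := C1; have [_ D2 _] := C2; rewrite /gjoin D1 D2 /= maxxx. Qed.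

Lemma bd_uplus_gamma_join x : bd_uplus (gamma G1) (gamma G2) x <-> gamma w x.
Proof.
split => [|Hx B [cs Hcs] HU].
  by apply; [apply: gamma_BD join_diag | move=> y [/gamma_join_l|/gamma_join_r]].
apply/Hcs; have {Hcs}HU y : gamma G1 y \/ gamma G2 y -> sat_all cs y by move/HU/Hcs.
elim: cs HU => [|c cs IH] //= HU; split; last by apply: IH => y /HU [].
apply: gamma_sat_cstr Hx; rewrite /gjoin le_w_max.
by rewrite !closed_le_bnd // => y Hy; have [] := HU y; tauto.
Qed.

Lemma arcs_of_point_outside R1 R2 x :
  subgraph R1 G1 -> is_closure R1 G1 -> subgraph R2 G2 -> is_closure R2 G2 ->
  gamma w x -> ~ gamma G1 x -> ~ gamma G2 x ->
  exists i j k l : node n,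
     [/\ is_arc R1 i j, is_arc R2 k l,
         lt_w (G1 i j) (G2 i j), lt_w (G2 k l) (G1 k l) &
         le_w (add_w (add_w (G1 i j) (G2 k l)) (Fin 2)) (add_w (w i l) (w k j))].
Proof.
move=> S1 Cl1 S2 Cl2 Hx Hx1 Hx2.
have [i [j [a [R1ij G1ij Ha]]]] := violated_arc S1 Cl1 Hx1.
have [k [l [b [R2kl G2kl Hb]]]] := violated_arc S2 Cl2 Hx2.
exists i, j, k, l; split; rewrite /is_arc ?R1ij ?R2kl //.
- by move: (Hx i j); rewrite /gjoin G1ij; case: (G2 i j) => [c|] //=; lia.
- by move: (Hx k l); rewrite /gjoin G2kl; case: (G1 k l) => [c|] //=; lia.
- rewrite G1ij G2kl; move: (Hx i l) (Hx k j).
  by case: (w i l) => [c|]; case: (w k j) => [c'|] //=; lia.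
Qed.

Lemma point_outside_of_arcs i j k l :
  lt_w (G1 i j) (G2 i j) -> lt_w (G2 k l) (G1 k l) ->
  le_w (add_w (add_w (G1 i j) (G2 k l)) (Fin 2)) (add_w (w i l) (w k j)) ->
  exists x, [/\ gamma w x, ~ gamma G1 x & ~ gamma G2 x].
Proof.
case E1: (G1 i j) => [a|] // Lij; case E2: (G2 k l) => [b|] // Lkl Hcyc.
have neW : exists g, potential w g.
  by have [p Hp] := ne1; exists (xval p); apply: gamma_join_l.
have Wij : lt_w (Fin a) (w i j) by apply: lt_w_le_trans Lij _; apply: le_w_max_r.
have Wkl : lt_w (Fin b) (w k l) by apply: lt_w_le_trans Lkl _; apply: le_w_max_l.
have Tw : triangular w by have [_ _ T1] := C1; have [_ _ T2] := C2; apply: triangular_gjoin.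
have [h [Ph Hij Hkl]] := potential_two_gaps Tw (join_diag j)
  (join_diag l) neW Wij Wkl Hcyc.
exists (to_point h); split; first exact: gamma_to_point.
- by move/(_ i j); rewrite E1 /= !xval_to_point; lia.
- by move/(_ k l); rewrite E2 /= !xval_to_point; lia.
Qed.

End JoinOfClosedGraphs.

Theorem theorem7 (n : nat) (G1 G2 R1 R2 : graph n) :
  closed_graph G1 -> closed_graph G2 ->
  (exists x, gamma G1 x) -> (exists x, gamma G2 x) ->
  subgraph R1 G1 -> is_closure R1 G1 ->
  subgraph R2 G2 -> is_closure R2 G2 ->
  let w := gjoin G1 G2 in
  (~ set_eq (bd_uplus (gamma G1) (gamma G2)) (fun x => gamma G1 x \/ gamma G2 x))
  <->
  (exists i j k l : node n,
     [/\ is_arc R1 i j, is_arc R2 k l,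
         lt_w (G1 i j) (G2 i j), lt_w (G2 k l) (G1 k l) &
         le_w (add_w (add_w (G1 i j) (G2 k l)) (Fin 2)) (add_w (w i l) (w k j))]).
Proof.
move=> C1 C2 ne1 ne2 S1 Cl1 S2 Cl2 w.
have uplusE := bd_uplus_gamma_join C1 C2 ne1 ne2.
split.
- move=> Hne; apply: NNPP => Hno; apply: Hne => x; rewrite uplusE.
  split => [Hx|[/gamma_join_l|/gamma_join_r] //].
  apply: NNPP => Hout; apply: Hno.
  by apply: (arcs_of_point_outside S1 Cl1 S2 Cl2 Hx); tauto.
- move=> [i [j [k [l [_ _ Lij Lkl Hcyc]]]]] Heq.
  have [x [Hx Hx1 Hx2]] := point_outside_of_arcs C1 C2 ne1 Lij Lkl Hcyc.
  by have [] := Heq x; rewrite uplusE => /(_ Hx) [].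
Qed.
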